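(* Let $p,q\in\mathbb{H}^2$ with $\mathbb{H}^2=p\mathbb{H}\oplus q\mathbb{H}$, let $S$ be the round two-sphere $\{[px+q]:x\in\mathbb{C}\}\cup\{[p]\}\cong\mathbb{C}\cup\{\infty\}$, so that the circle through $[p],[q],[r]$, $r=p+q$, is $\{[px+q]:x\in\mathbb{R}\}\cup\{[p]\}$. Let $C_r=\mathbb{P}(\mathrm{span}\{p\wedge pj,q\wedge qj,r\wedge rj\})\cap Q^4$. Then every point of $C_r$ corresponds either to a point of this circle (including $\infty=[p]$), or to a two-sphere in $\mathbb{HP}^1$ which half-touches $S$ (in these coordinates) at a pair of points $z,\bar z$ of $\mathbb{C}$, i.e. at $[pz+q]$ and $[p\bar z+q]$.
   Context: $\mathbb{H}$ denotes the quaternions, $\mathbb{C}=\mathrm{span}_{\mathbb{R}}\{1,i\}$, $zj=j\bar z$ for $z\in\mathbb{C}$; $\mathbb{H}^2$ is a right $\mathbb{H}$-vector space identified with $\mathbb{C}^4$; $\mathbb{HP}^1=\{v\mathbb{H}\}\cong S^4$; $\mathbb{CP}^3=\mathbb{P}(\mathbb{C}^4)$; the twistor fibre over $v\mathbb{H}$ is the line through $[v],[vj]$. $Q^4=\{[\alpha]\in\mathbb{P}(\Lambda^2\mathbb{C}^4):\alpha\wedge\alpha=0\}$, $[v\wedge w]$ identified with the line through $[v],[w]$. The antilinear extension of $v\wedge w\mapsto vj\wedge wj$ gives a real structure $j$ on $Q^4$ whose real points $[v\wedge vj]$ are identified with points $v\mathbb{H}$ of $S^4$; a non-real point is the twistor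 lift of a round two-sphere with conformal structure (its image under $v\mathbb{C}\mapsto v\mathbb{H}$). The twistor lift of $S$ (with the conformal structure in which $x\in\mathbb{C}$ is a holomorphic coordinate) is the line through $[p],[q]$. A null line is a projective line contained in $Q^4$; two distinct two-spheres half-touch if they span a null line containing no real point; they then meet in exactly two points of $S^4$, at which they are said to half-touch. *)

From HB Require Import structures.
From mathcomp Require Import all_boot all_order all_algebra.
Set Implicit Arguments. Unset Strict Implicit. Unset Printing Implicit Defensive.
Import Order.TTheory GRing.Theory Num.Theory.
Local Open Scope ring_scope.

Section Twistor.
Variable C : numClosedFieldType.

(* H^2 identified with C^4 (column vectors): a quaternion is written a + j b
   (a, b in C), so (a1 + j b1, a2 + j b2) |-> (a1, b1, a2, b2); right
   multiplication by z in C is scalar multiplication.  Right multiplication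
   by j is then (a, b) |-> (-conj b, conj a) in each quaternionic coordinate. *)
Definition Jm : 'M[C]_4 :=
  \matrix_(i < 4, j < 4)
    (if ((i : nat) == (j : nat).+1) && odd i then 1
     else if ((j : nat) == (i : nat).+1) && ~~ odd i then -1 else 0).

Definition quatj (v : 'cV[C]_4) : 'cV[C]_4 := Jm *m map_mx Num.conj v.

(* Lambda^2 C^4 represented by antisymmetric 4x4 matrices; v /\ w *)
Definition wedge (v w : 'cV[C]_4) : 'M[C]_4 := v *m w^T - w *m v^T.

(* antilinear extension of v /\ w |-> vj /\ wj *)
Definition jwedge (a : 'M[C]_4) : 'M[C]_4 := Jm *m map_mx Num.conj a *m Jm^T.

Definition i0 : 'I_4 := Ordinal (isT : (0 < 4)%N).
Definition i1 : 'I_4 := Ordinal (isT : (1 < 4)%N).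
Definition i2 : 'I_4 := Ordinal (isT : (2 < 4)%N).
Definition i3 : 'I_4 := Ordinal (isT : (3 < 4)%N).

(* a /\ a = 2 * pf a * e0/\e1/\e2/\e3 *)
Definition pf (a : 'M[C]_4) : C :=
  a i0 i1 * a i2 i3 - a i0 i2 * a i1 i3 + a i0 i3 * a i1 i2.

Definition inQ4 (a : 'M[C]_4) : Prop := a != 0 /\ pf a = 0.

Definition is_real_pt (a : 'M[C]_4) : Prop := exists c : C, jwedge a = c *: a.

(* u /\ a = 0 in Lambda^3 C^4, i.e. [u] lies on the line [a] *)
Definition on_line (u : 'cV[C]_4) (a : 'M[C]_4) : Prop :=
  forall i j k : 'I_4, u i ord0 * a j k - u j ord0 * a i k + u k ord0 * a i j = 0.

(* u in vH, i.e. u in span_C {v, vj}; for nonzero u, v this says uH = vH *)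
Definition in_qline (u v : 'cV[C]_4) : Prop :=
  exists a b : C, u = a *: v + b *: quatj v.

(* H^2 = pH (+) qH : p, pj, q, qj are C-linearly independent *)
Definition qdirect (p q : 'cV[C]_4) : Prop :=
  forall a b c d : C,
    a *: p + b *: quatj p + c *: q + d *: quatj q = 0 ->
    [/\ a = 0, b = 0, c = 0 & d = 0].

(* the point uH of S^4 = HP^1 lies on the two-sphere whose twistor lift is
   the line [a]: the image of the line under vC |-> vH *)
Definition on_sphere (a : 'M[C]_4) (u : 'cV[C]_4) : Prop :=
  exists u' : 'cV[C]_4, [/\ u' != 0, in_qline u' u & on_line u' a].

(* two distinct two-spheres (non-real points a, b of Q^4) half-touch:
   they span a null line containing no real point *)
Definition half_touch (a b : 'M[C]_4) : Prop :=
  [/\ inQ4 a /\ inQ4 b, ~ is_real_pt a /\ ~ is_real_pt b,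
      (forall c : C, a != c *: b),
      (forall s t : C, pf (s *: a + t *: b) = 0) &
      (forall s t : C, s *: a + t *: b != 0 -> ~ is_real_pt (s *: a + t *: b))].

Definition in_Cr (p q r : 'cV[C]_4) (a : 'M[C]_4) : Prop :=
  inQ4 a /\ exists x y z : C,
    a = x *: wedge p (quatj p) + y *: wedge q (quatj q) + z *: wedge r (quatj r).

End Twistor.

From HB Require Import structures.
From mathcomp Require Import all_boot all_order all_algebra ring.
Import Order.TTheory GRing.Theory Num.Theory.
Local Open Scope ring_scope.
Set Implicit Arguments. Unset Strict Implicit. Unset Printing Implicit Defensive.

(* Let B be the matrix with columns p, pj, q, qj.  It is invertible since
   H^2 = pH + qH, and H-linear, so the congruence K |-> B K B^T on bivectors
   preserves Q^4, its real structure, incidence, quaternionic lines and hence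
   half-touching; this reduces everything to p = e0, q = e2.  There a point
   x p/\pj + y q/\qj + z r/\rj of C_r lies on Q^4 iff (x + z)(y + z) = z^2, so
   it is either p/\pj or b (w p + q)/\(w^* p + q)j with w = z/(y + z).  For real
   w this is the point (w p + q)H of the circle.  Otherwise its pencil with
   p/\q is null and free of real points, and a point uH common to both spheres
   satisfies s (w p + q) + t (w^* p + q)j = (l p + m q) lambda; comparing
   coefficients forces s t^* (w^* - w) = 0, so uH is (w p + q)H or
   (w^* p + q)H. *)

Section Coordinates.
Variable C : numClosedFieldType.
Implicit Types (u v w : 'cV[C]_4) (K L : 'M[C]_4).

Definition vec4 (a b c d : C) : 'cV[C]_4 := \col_(i < 4) nth 0 [:: a; b; c; d] i.

Definition p_std : 'cV[C]_4 := vec4 1 0 0 0.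
Definition q_std : 'cV[C]_4 := vec4 0 0 1 0.

Lemma big_ord4 (F : 'I_4 -> C) : \sum_(i < 4) F i = F i0 + F i1 + F i2 + F i3.
Proof.
rewrite !big_ord_recl big_ord0 addr0 !addrA.
by do 3? congr (_ + _); congr F; apply: val_inj.
Qed.

Lemma ord4P (i : 'I_4) : [\/ i = i0, i = i1, i = i2 | i = i3].
Proof.
case: i => [[|[|[|[|//]]]] Hi]; [apply: Or41 | apply: Or42 | apply: Or43 | apply: Or44];
  exact: val_inj.
Qed.

Lemma col4P u v : u i0 ord0 = v i0 ord0 -> u i1 ord0 = v i1 ord0 ->
  u i2 ord0 = v i2 ord0 -> u i3 ord0 = v i3 ord0 -> u = v.
Proof.
move=> h0 h1 h2 h3; apply/colP => i; rewrite (ord1 ord0) in h0 h1 h2 h3 *.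
by case: (ord4P i) => ->.
Qed.

Lemma vec4E0 a b c d : vec4 a b c d i0 ord0 = a. Proof. by rewrite mxE. Qed.
Lemma vec4E1 a b c d : vec4 a b c d i1 ord0 = b. Proof. by rewrite mxE. Qed.
Lemma vec4E2 a b c d : vec4 a b c d i2 ord0 = c. Proof. by rewrite mxE. Qed.
Lemma vec4E3 a b c d : vec4 a b c d i3 ord0 = d. Proof. by rewrite mxE. Qed.
Definition vec4E := (vec4E0, vec4E1, vec4E2, vec4E3).

Lemma vec4_eta u : u = vec4 (u i0 ord0) (u i1 ord0) (u i2 ord0) (u i3 ord0).
Proof. by apply: col4P; rewrite !mxE. Qed.

Fact wedge_key : unit. Proof. exact: tt. Qed.
Definition wedgeL := locked_with wedge_key (@wedge C).

(* [wedge u v] unfolds to a matrix difference, which entry rewriting (mxE) would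
   see through; entries are therefore computed on this locked copy. *)
Lemma wedge_lock : @wedge C = wedgeL. Proof. by rewrite /wedgeL unlock. Qed.

Lemma wedgeLE u v i j : wedgeL u v i j = u i ord0 * v j ord0 - v i ord0 * u j ord0.
Proof. by rewrite -wedge_lock /wedge !mxE !big_ord1 !mxE. Qed.

Lemma quatjE u :
  quatj u = vec4 (- (u i1 ord0)^*) (u i0 ord0)^* (- (u i3 ord0)^*) (u i2 ord0)^*.
Proof. by apply: col4P; rewrite !mxE big_ord4 !mxE /=; ring. Qed.

Lemma quatj_vec4 a b c d : quatj (vec4 a b c d) = vec4 (- b^*) a^* (- d^*) c^*.
Proof. by rewrite quatjE !mxE. Qed.

Lemma quatjD u v : quatj (u + v) = quatj u + quatj v.
Proof. by rewrite /quatj map_mxD mulmxDr. Qed.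

Lemma quatjZ c u : quatj (c *: u) = c^* *: quatj u.
Proof. by rewrite /quatj map_mxZ -scalemxAr. Qed.

Lemma quatjK u : quatj (quatj u) = - u.
Proof.
by apply: col4P; rewrite !quatjE !mxE /= ?rmorphN ?conjCK //; congr (- _); apply: conjCK.
Qed.

Lemma jwedgeD K L : jwedge (K + L) = jwedge K + jwedge L.
Proof. by rewrite /jwedge map_mxD mulmxDr mulmxDl. Qed.

Lemma jwedgeZ c K : jwedge (c *: K) = c^* *: jwedge K.
Proof. by rewrite /jwedge map_mxZ -scalemxAr -scalemxAl. Qed.

Lemma jwedge_wedge u v : jwedge (wedge u v) = wedge (quatj u) (quatj v).
Proof.
rewrite /jwedge /wedge /quatj map_mxB !map_mxM -!map_trmx.
by rewrite mulmxBr mulmxBl !trmx_mul !mulmxA.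
Qed.

Lemma wedge_tr u v : (wedge u v)^T = - wedge u v.
Proof. by rewrite /wedge linearB /= !trmx_mul !trmxK opprB. Qed.

End Coordinates.

Arguments p_std {C}.
Arguments q_std {C}.

Section Lines.
Variable C : numClosedFieldType.
Implicit Types (u v w : 'cV[C]_4) (K L B : 'M[C]_4).

(* Close [x = y] from equations [L = R] once [x - y] is a linear combination
   of the [L - R] (checked by [ring]). *)
Lemma eq_of_lincomb1 (x y L R : C) : L = R -> x - y = L - R -> x = y.
Proof. by move=> -> /eqP; rewrite subrr subr_eq0 => /eqP. Qed.

Lemma eq_of_lincomb2 (k1 k2 x y L1 R1 L2 R2 : C) : L1 = R1 -> L2 = R2 ->
  x - y = k1 * (L1 - R1) + k2 * (L2 - R2) -> x = y.
Proof. by move=> -> -> /eqP; rewrite !subrr !mulr0 addr0 subr_eq0 => /eqP. Qed.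

Lemma on_lineZ c u K : c != 0 -> on_line u (c *: K) <-> on_line u K.
Proof.
move=> c_neq0; split=> uK i j k; last by rewrite !mxE -[RHS](mulr0 c) -(uK i j k); ring.
by apply: (mulfI c_neq0); rewrite mulr0 -[RHS](uK i j k) !mxE; ring.
Qed.

Lemma on_line_wedge s t v w : on_line (s *: v + t *: w) (wedge v w).
Proof. by move=> i j k; rewrite wedge_lock !mxE !wedgeLE; ring. Qed.

Lemma on_line_wedgel v w : on_line v (wedge v w).
Proof. by move=> i j k; rewrite wedge_lock !wedgeLE; ring. Qed.

Lemma on_line_wedger v w : on_line w (wedge v w).
Proof. by move=> i j k; rewrite wedge_lock !wedgeLE; ring. Qed.

Lemma in_qline_trans u v w : in_qline u v -> in_qline v w -> in_qline u w.
Proof.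
move=> [x [y ->]] [z [t ->]]; exists (x * z - y * t^*), (x * t + y * z^*).
by rewrite quatjD !quatjZ quatjK; apply/matrixP => i k; rewrite !mxE; ring.
Qed.

Lemma in_qline_quatj u v : in_qline u v -> in_qline (quatj u) v.
Proof.
move=> [x [y ->]]; exists (- y^*), x^*.
by rewrite quatjD !quatjZ quatjK; apply/matrixP => i k; rewrite !mxE; ring.
Qed.

Lemma in_qline_sym u v : u != 0 -> in_qline u v -> in_qline v u.
Proof.
move=> u_neq0 [x [y uE]].
have N_neq0 : x * x^* + y * y^* != 0.
  apply: contraNneq u_neq0 => /eqP; rewrite -!normCK paddr_eq0 ?exprn_ge0 //.
  by rewrite !expf_eq0 /= !normr_eq0 uE => /andP[/eqP-> /eqP->]; rewrite !scale0r addr0.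
exists (x^* / (x * x^* + y * y^*)), (- y / (x * x^* + y * y^*)).
by rewrite uE quatjD !quatjZ quatjK; apply/matrixP => i k; rewrite !mxE; field.
Qed.

Lemma congr_mxE B K i j :
  (B *m K *m B^T) i j = \sum_(k < 4) \sum_(l < 4) B i k * K k l * B j l.
Proof.
rewrite mxE (eq_bigr (fun l => \sum_(k < 4) B i k * K k l * B j l)).
  by rewrite exchange_big.
by move=> l _; rewrite !mxE big_distrl; apply: eq_bigr => k _; rewrite ?mxE.
Qed.

(* [pf (B K B^T) = det B * pf K]; the factor [det B] shows up as the Pfaffian of
   the image of the standard form. *)
Definition std_form : 'M[C]_4 :=
  wedge (vec4 1 0 0 0) (vec4 0 1 0 0) + wedge (vec4 0 0 1 0) (vec4 0 0 0 1).

Lemma std_form_congrE B i j : (B *m std_form *m B^T) i j =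
  B i i0 * B j i1 - B i i1 * B j i0 + B i i2 * B j i3 - B i i3 * B j i2.
Proof.
by rewrite congr_mxE !big_ord4 /std_form wedge_lock !mxE !wedgeLE !vec4E; ring.
Qed.

Lemma pf_congr B K : K^T = - K ->
  pf (B *m K *m B^T) = pf (B *m std_form *m B^T) * pf K.
Proof.
move=> K_antisym.
have Kji i j : K j i = - K i j.
  by have := congr1 (fun M : 'M[C]_4 => M i j) K_antisym; rewrite !mxE.
have Kii i : K i i = 0.
  by apply/eqP; have /eqP := Kji i i; rewrite -addr_eq0 -mulr2n mulrn_eq0.
rewrite /pf !std_form_congrE !congr_mxE !big_ord4.
rewrite !Kii ![K i1 i0]Kji ![K i2 i0]Kji ![K i3 i0]Kji ![K i2 i1]Kji ![K i3 i1]Kji.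
rewrite ![K i3 i2]Kji; ring.
Qed.

Lemma on_line_congr B u K : on_line u K -> on_line (B *m u) (B *m K *m B^T).
Proof.
move=> uK i j k.
have <- : \sum_(a < 4) \sum_(b < 4) \sum_(c < 4) B i a * B j b * B k c *
    (u a ord0 * K b c - u b ord0 * K a c + u c ord0 * K a b) = 0.
  by do 3!(rewrite big1 // => ? _); rewrite uK mulr0.
by rewrite !congr_mxE !mxE !big_ord4; ring.
Qed.
Lemma wedge_mul B u v : wedge (B *m u) (B *m v) = B *m wedge u v *m B^T.
Proof. by rewrite /wedge !trmx_mul mulmxBr mulmxBl !mulmxA. Qed.

Lemma in_Cr_antisym p q r K : in_Cr p q r K -> K^T = - K.
Proof.
move=> [_ [x [y [z ->]]]].
by rewrite wedge_lock !linearD !linearZ /= -wedge_lock !wedge_tr !scalerN -!opprD.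
Qed.

Lemma congr_antisym B K : K^T = - K -> (B *m K *m B^T)^T = - (B *m K *m B^T).
Proof. by move=> K_antisym; rewrite !trmx_mul trmxK K_antisym mulNmx mulmxN mulmxA. Qed.

End Lines.

(* [B] commutes with right multiplication by [j], i.e. it is H-linear. *)
Definition quat_linear (C : numClosedFieldType) (B : 'M[C]_4) : Prop :=
  Jm C *m map_mx Num.conj B = B *m Jm C.

Section QuatLinear.
Variable C : numClosedFieldType.
Variable B : 'M[C]_4.
Hypotheses (B_unit : B \in unitmx) (B_quat : quat_linear B).
Implicit Types (u v w : 'cV[C]_4) (K L : 'M[C]_4).

Lemma quatj_mul u : quatj (B *m u) = B *m quatj u.
Proof. by rewrite /quatj map_mxM mulmxA B_quat mulmxA. Qed.

Lemma jwedge_congr K : jwedge (B *m K *m B^T) = B *m jwedge K *m B^T.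
Proof.
rewrite /jwedge !map_mxM -map_trmx !mulmxA B_quat -mulmxA -trmx_mul B_quat.
by rewrite trmx_mul !mulmxA.
Qed.

Lemma congrK K : invmx B *m (B *m K *m B^T) *m (invmx B)^T = K.
Proof. by rewrite !mulmxA mulVmx // mul1mx -mulmxA -trmx_mul mulVmx // trmx1 mulmx1. Qed.

Lemma congrKV K : B *m (invmx B *m K *m (invmx B)^T) *m B^T = K.
Proof. by rewrite !mulmxA mulmxV // mul1mx -mulmxA -trmx_mul mulmxV // trmx1 mulmx1. Qed.

Lemma congr_inj : injective (fun K => B *m K *m B^T).
Proof. by move=> K L /(congr1 (fun M => invmx B *m M *m (invmx B)^T)); rewrite !congrK. Qed.

Lemma congr_eq0 K : (B *m K *m B^T == 0) = (K == 0).
Proof. by rewrite -(inj_eq congr_inj) mulmx0 mul0mx. Qed.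

Lemma is_real_pt_congr K : is_real_pt (B *m K *m B^T) <-> is_real_pt K.
Proof.
rewrite /is_real_pt jwedge_congr; split=> -[c cE]; exists c.
  by apply: congr_inj; rewrite /= cE scalemxAl scalemxAr.
by rewrite cE -scalemxAr -scalemxAl.
Qed.

Lemma pf_congr_eq0 K : K^T = - K -> pf (B *m K *m B^T) = 0 <-> pf K = 0.
Proof.
move=> K_antisym; split=> [|pfK]; last by rewrite pf_congr // pfK mulr0.
by move=> pfBK; rewrite -(congrK K) pf_congr ?pfBK ?mulr0 // congr_antisym.
Qed.

Lemma inQ4_congr K : K^T = - K -> inQ4 (B *m K *m B^T) <-> inQ4 K.
Proof. by move=> K_antisym; rewrite /inQ4 congr_eq0 pf_congr_eq0. Qed.

Lemma mulmx_unit_eq0 u : (B *m u == 0) = (u == 0).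
Proof.
by apply/eqP/eqP => [Bu0 | ->]; [rewrite -(mulKmx B_unit u) Bu0 mulmx0 | rewrite mulmx0].
Qed.

Lemma in_qline_mul u v : in_qline (B *m u) (B *m v) <-> in_qline u v.
Proof.
have B_inj : injective (@mulmx _ 4 4 1 B).
  by move=> x y xy; rewrite -(mulKmx B_unit x) xy mulKmx.
split=> -[a [b uE]]; exists a, b.
  by apply: B_inj; rewrite uE mulmxDr -!scalemxAr quatj_mul.
by rewrite uE mulmxDr -!scalemxAr quatj_mul.
Qed.

Lemma on_sphere_congr K u : on_sphere (B *m K *m B^T) (B *m u) <-> on_sphere K u.
Proof.
split=> -[u' [u'_neq0 u'u u'K]].
  exists (invmx B *m u'); split.
  - by rewrite -mulmx_unit_eq0 mulKVmx.
  - by rewrite -in_qline_mul mulKVmx.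
  - by rewrite -(congrK K); apply: on_line_congr.
exists (B *m u'); split.
- by rewrite mulmx_unit_eq0.
- by rewrite in_qline_mul.
- exact: on_line_congr.
Qed.

Lemma scale_congr c K : c *: (B *m K *m B^T) = B *m (c *: K) *m B^T.
Proof. by rewrite scalemxAl scalemxAr. Qed.

Lemma comb_congr s t K L :
  s *: (B *m K *m B^T) + t *: (B *m L *m B^T) = B *m (s *: K + t *: L) *m B^T.
Proof. by rewrite !scale_congr -mulmxDl -mulmxDr. Qed.

Lemma half_touch_congr K L : K^T = - K -> L^T = - L ->
  half_touch K L -> half_touch (B *m K *m B^T) (B *m L *m B^T).
Proof.
move=> K_antisym L_antisym [[KQ LQ] [K_nreal L_nreal] K_nprop null real_free].
have comb_antisym s t : (s *: K + t *: L)^T = - (s *: K + t *: L).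
  by rewrite linearD !linearZ /= K_antisym L_antisym !scalerN opprD.
split.
- by split; apply/inQ4_congr.
- by split; rewrite is_real_pt_congr.
- by move=> c; rewrite scale_congr; apply: contra_neq (K_nprop c) => /congr_inj.
- by move=> s t; rewrite comb_congr pf_congr_eq0.
- by move=> s t; rewrite comb_congr congr_eq0 is_real_pt_congr; apply: real_free.
Qed.

Lemma in_Cr_congr p q r K :
  in_Cr (B *m p) (B *m q) (B *m r) (B *m K *m B^T) <-> in_Cr p q r K.
Proof.
have combE x y z :
  x *: wedge (B *m p) (quatj (B *m p)) + y *: wedge (B *m q) (quatj (B *m q))
    + z *: wedge (B *m r) (quatj (B *m r)) =
  B *m (x *: wedge p (quatj p) + y *: wedge q (quatj q) + z *: wedge r (quatj r)) *m B^T.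
  by rewrite !quatj_mul !wedge_mul !comb_congr scale_congr -mulmxDl -mulmxDr.
split=> CrK; have [KQ [x [y [z KE]]]] := CrK.
  have K_antisym : K^T = - K.
    by rewrite -(congrK K) congr_antisym // (in_Cr_antisym CrK).
  split; first exact/(inQ4_congr K_antisym).
  by exists x, y, z; apply: congr_inj; rewrite /= KE combE.
split; first exact/(inQ4_congr (in_Cr_antisym CrK)).
by exists x, y, z; rewrite KE combE.
Qed.

End QuatLinear.

Section Frame.
Variable C : numClosedFieldType.
Variables p q : 'cV[C]_4.

Definition frame : 'M[C]_4 :=
  \matrix_(i, j) nth 0 [:: p i ord0; quatj p i ord0; q i ord0; quatj q i ord0] j.

Lemma frame_vec4 a b c d :
  frame *m vec4 a b c d = a *: p + b *: quatj p + c *: q + d *: quatj q.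
Proof. by apply/matrixP => i k; rewrite (ord1 k) mxE big_ord4 !mxE /=; ring. Qed.

Lemma frame_p : frame *m p_std = p.
Proof. by rewrite frame_vec4 !scale0r scale1r !addr0. Qed.

Lemma frame_q : frame *m q_std = q.
Proof. by rewrite frame_vec4 !scale0r scale1r !addr0 !add0r. Qed.

Lemma frame_quat_linear : quat_linear frame.
Proof.
apply/matrixP => i j.
have -> : (Jm C *m map_mx Num.conj frame) i j = quatj (col j frame) i ord0.
  by rewrite !mxE; apply: eq_bigr => k _; rewrite !mxE.
have -> : (frame *m Jm C) i j = (frame *m col j (Jm C)) i ord0.
  by rewrite !mxE; apply: eq_bigr => k _; rewrite !mxE.
have col_frame k : col k frame = nth 0 [:: p; quatj p; q; quatj q] k.
  by apply/colP => l; case: (ord4P k) => ->; rewrite mxE [frame _ _]mxE.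
case: (ord4P j) => ->; rewrite col_frame /= ?quatjK.
- rewrite (_ : col i0 (Jm C) = vec4 0 1 0 0); last by apply: col4P; rewrite !mxE.
  by rewrite frame_vec4 !scale0r scale1r !addr0 add0r.
- rewrite (_ : col i1 (Jm C) = vec4 (-1) 0 0 0); last by apply: col4P; rewrite !mxE.
  by rewrite frame_vec4 !scale0r scaleN1r !addr0 mxE.
- rewrite (_ : col i2 (Jm C) = vec4 0 0 0 1); last by apply: col4P; rewrite !mxE.
  by rewrite frame_vec4 !scale0r scale1r !add0r.
- rewrite (_ : col i3 (Jm C) = vec4 0 0 (-1) 0); last by apply: col4P; rewrite !mxE.
  by rewrite frame_vec4 !scale0r scaleN1r !addr0 !add0r mxE.
Qed.

Hypothesis pq_direct : qdirect p q.

Lemma frame_unit : frame \in unitmx.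
Proof.
have frame_inj (c : 'cV[C]_4) : frame *m c = 0 -> c = 0.
  rewrite [c]vec4_eta frame_vec4 => /pq_direct[-> -> -> ->].
  by apply: col4P; rewrite !vec4E mxE.
rewrite -unitmx_tr -row_free_unit -kermx_eq0; apply/eqP/row_matrixP => k.
rewrite row0; apply: trmx_inj; rewrite trmx0; apply: frame_inj.
have /(congr1 (row k)) := mulmx_ker frame^T; rewrite row_mul row0.
by move/(congr1 trmx); rewrite trmx_mul trmxK trmx0.
Qed.

End Frame.

Section Model.
Variable C : numClosedFieldType.
Implicit Types (b c s t w x y z : C) (u v : 'cV[C]_4) (K : 'M[C]_4).

Lemma comb_std w : w *: p_std + q_std = vec4 w 0 1 0 :> 'cV[C]_4.
Proof. by apply: col4P; rewrite !mxE /=; ring. Qed.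

Lemma quatj_comb_std w : quatj (w^* *: p_std + q_std) = vec4 0 w 0 1 :> 'cV[C]_4.
Proof. by rewrite comb_std quatj_vec4 conjCK conjC0 conjC1 oppr0. Qed.

Lemma quatj_p_std : quatj p_std = vec4 0 1 0 0 :> 'cV[C]_4.
Proof. by rewrite quatj_vec4 conjC0 conjC1 oppr0. Qed.

Lemma quatj_q_std : quatj q_std = vec4 0 0 0 1 :> 'cV[C]_4.
Proof. by rewrite quatj_vec4 conjC0 conjC1 oppr0. Qed.

Lemma in_Cr_std K : in_Cr p_std q_std (p_std + q_std) K ->
  (exists c, K = c *: wedge p_std (quatj p_std)) \/
  exists b w, b != 0 /\ K = b *: wedge (w *: p_std + q_std) (quatj (w^* *: p_std + q_std)).
Proof.
move=> [[_ pfK] [x [y [z KE]]]].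
rewrite quatjD quatj_p_std quatj_q_std in KE.
have pf_eq : (x + z) * (y + z) = z ^+ 2.
  apply/eqP; rewrite -subr_eq0 -pfK KE /pf wedge_lock !mxE !wedgeLE !mxE /=.
  by apply/eqP; ring.
have [yz0 | b_neq0] := eqVneq (y + z) 0.
  have z0 : z = 0.
    by move: pf_eq; rewrite yz0 mulr0 => /esym/eqP; rewrite expf_eq0 /= => /eqP.
  left; exists x; rewrite KE quatj_p_std z0.
  by move: yz0; rewrite z0 addr0 => ->; rewrite !scale0r !addr0.
right; exists (y + z), (z / (y + z)); split => //.
have xE : x = z ^+ 2 / (y + z) - z by rewrite -pf_eq mulfK // addrK.
rewrite KE quatj_comb_std comb_std; apply/matrixP => i j.
rewrite wedge_lock !mxE !wedgeLE.
by case: (ord4P i) => ->; case: (ord4P j) => ->; rewrite !vec4E !mxE /= xE; field.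
Qed.

Lemma on_line_pq_std u : on_line u (wedge p_std q_std) ->
  u = u i0 ord0 *: p_std + u i2 ord0 *: q_std.
Proof.
move=> uS; have := uS i1 i0 i2; have := uS i3 i0 i2.
rewrite wedge_lock !wedgeLE !mxE /= => h3 h1.
apply: col4P; rewrite !mxE /=;
  [ring | apply: (eq_of_lincomb1 h1); ring | ring | apply: (eq_of_lincomb1 h3); ring].
Qed.

(* The coordinate equations of [s (w p + q) + t (w^* p + q) j = (l p + m q) (c1 + j c2)];
   they force [s = 0] or [t = 0] unless [w] is real. *)
Lemma conj_cross_eq0 w s t c1 c2 l m : w * s = c1 * l -> w * t = c2 * l^* ->
  s = c1 * m -> t = c2 * m^* -> s * t^* * (w - w^*) = 0.
Proof.
move=> e0 e1 e2 e3.
have e1' : w^* * t^* = c2^* * l by rewrite -rmorphM e1 rmorphM /= conjCK.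
have e3' : t^* = c2^* * m by rewrite e3 rmorphM /= conjCK.
transitivity (t^* * (w * s) - s * (w^* * t^*)); first by ring.
by rewrite e0 e1' e3' e2; ring.
Qed.

Section HalfTouchStd.
Variables b w : C.
Hypotheses (b_neq0 : b != 0) (w_nreal : w^* != w).

Local Notation A := (b *: wedge (w *: p_std + q_std) (quatj (w^* *: p_std + q_std))).
Local Notation S := (wedge p_std q_std).

Lemma pencil_null_std s t : pf (s *: A + t *: S) = 0.
Proof. by rewrite quatj_comb_std comb_std /pf wedge_lock !mxE !wedgeLE !mxE /=; ring. Qed.

Lemma pencil_nreal_std s t : s *: A + t *: S != 0 -> ~ is_real_pt (s *: A + t *: S).
Proof.
move=> M_neq0 [c McE]; move: M_neq0 McE; rewrite quatj_comb_std comb_std => M_neq0.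
rewrite jwedgeD !jwedgeZ !jwedge_wedge quatj_p_std quatj_q_std !quatj_vec4.
rewrite !conjC0 !conjC1 !oppr0 => McE.
have entry i j := congr1 (fun M : 'M[C]_4 => M i j) McE.
have := entry i1 i3; have := entry i2 i3; have := entry i0 i3.
rewrite wedge_lock !mxE !wedgeLE !mxE /= => h03 h23 h13.
have /eqP : t^* = 0 by apply: (eq_of_lincomb1 h13); ring.
rewrite conjC_eq0 => /eqP t0.
have /eqP : s^* * b^* * (w^* - w) = 0.
  by apply: (eq_of_lincomb2 (k1 := 1) (k2 := - w) h03 h23); ring.
rewrite !mulf_eq0 !conjC_eq0 (negbTE b_neq0) subr_eq0 (negbTE w_nreal) !orbF => /eqP s0.
by move: M_neq0; rewrite s0 t0 !scale0r addr0 eqxx.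
Qed.

Lemma half_touch_std : half_touch A S.
Proof.
have A_nprop c : A != c *: S.
  apply/eqP => /(congr1 (fun M : 'M[C]_4 => M i2 i3)).
  rewrite quatj_comb_std comb_std wedge_lock !mxE !wedgeLE !mxE /= => h.
  by apply: (negP b_neq0); apply/eqP; apply: (eq_of_lincomb1 h); ring.
have A_neq0 : A != 0 by have := A_nprop 0; rewrite scale0r.
have S_neq0 : S != 0 :> 'M[C]_4.
  apply/eqP => /(congr1 (fun M : 'M[C]_4 => M i0 i2)).
  rewrite wedge_lock !wedgeLE !mxE /= => h.
  by apply: (negP (oner_neq0 C)); apply/eqP; apply: (eq_of_lincomb1 h); ring.
have A_pencil : A = 1 *: A + 0 *: S by rewrite scale1r scale0r addr0.
have S_pencil : S = 0 *: A + 1 *: S by rewrite scale0r scale1r add0r.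
split; [|split|exact: A_nprop|exact: pencil_null_std|exact: pencil_nreal_std].
- by split; split=> //; [rewrite A_pencil | rewrite S_pencil]; apply: pencil_null_std.
- by rewrite A_pencil; apply: pencil_nreal_std; rewrite -A_pencil.
- by rewrite S_pencil; apply: pencil_nreal_std; rewrite -S_pencil.
Qed.

Lemma on_line_A_std u : on_line u A ->
  u = u i2 ord0 *: (w *: p_std + q_std) + u i3 ord0 *: quatj (w^* *: p_std + q_std).
Proof.
move/(on_lineZ _ _ b_neq0); rewrite quatj_comb_std comb_std => uA.
have := uA i0 i2 i3; have := uA i1 i2 i3; rewrite wedge_lock !wedgeLE !mxE /= => h1 h0.
apply: col4P; rewrite !mxE /=;
  [apply: (eq_of_lincomb1 h0); ring | apply: (eq_of_lincomb1 h1); ring | ring | ring].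
Qed.

Lemma common_points_std u : u != 0 -> on_sphere A u -> on_sphere S u ->
  in_qline u (w *: p_std + q_std) \/ in_qline u (w^* *: p_std + q_std).
Proof.
move=> u_neq0 [u' [u'_neq0 u'u /on_line_A_std u'E]].
move=> [u'' [u''_neq0 u''u /on_line_pq_std u''E]].
have [c1 [c2 u'u'']] := in_qline_trans u'u (in_qline_sym u''_neq0 u''u).
move: u'E u''E u'u''; set s := u' i2 ord0; set t := u' i3 ord0.
set l := u'' i0 ord0; set m := u'' i2 ord0 => u'E u''E.
rewrite u'E u''E => coords.
rewrite quatj_comb_std comb_std quatjD !quatjZ quatj_p_std quatj_q_std in coords.
have entry i := congr1 (fun v : 'cV[C]_4 => v i ord0) coords.
have := entry i0; have := entry i1; have := entry i2; have := entry i3.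
rewrite !mxE /= => h3 h2 h1 h0.
have e0 : w * s = c1 * l by apply: (eq_of_lincomb1 h0); ring.
have e1 : w * t = c2 * l^* by apply: (eq_of_lincomb1 h1); ring.
have e2 : s = c1 * m by apply: (eq_of_lincomb1 h2); ring.
have e3 : t = c2 * m^* by apply: (eq_of_lincomb1 h3); ring.
have /eqP := conj_cross_eq0 e0 e1 e2 e3.
rewrite !mulf_eq0 subr_eq0 (eq_sym w) (negbTE w_nreal) orbF conjC_eq0.
case/orP=> [/eqP s0 | /eqP t0].
- right; apply: in_qline_trans (in_qline_sym u'_neq0 u'u) _.
  by rewrite u'E s0 scale0r add0r; exists 0, t; rewrite scale0r add0r.
- left; apply: in_qline_trans (in_qline_sym u'_neq0 u'u) _.
  by rewrite u'E t0 scale0r addr0; exists s, 0; rewrite scale0r addr0.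
Qed.

Lemma meet_points_std u : u != 0 ->
  in_qline u (w *: p_std + q_std) \/ in_qline u (w^* *: p_std + q_std) ->
  on_sphere A u /\ on_sphere S u.
Proof.
have on_S z : on_line (z *: p_std + q_std) S.
  by have := on_line_wedge z 1 p_std q_std; rewrite scale1r.
have comb_neq0 z : z *: p_std + q_std != 0 :> 'cV[C]_4.
  apply/eqP => /(congr1 (fun v : 'cV[C]_4 => v i2 ord0)) /eqP.
  by rewrite comb_std !mxE oner_eq0.
move=> u_neq0 [] /(in_qline_sym u_neq0) vu.
  split; exists (w *: p_std + q_std); split=> //.
  exact/(on_lineZ _ _ b_neq0)/on_line_wedgel.
split; [exists (quatj (w^* *: p_std + q_std)) | exists (w^* *: p_std + q_std)]; split=> //.
- by rewrite quatj_comb_std; apply/eqP => /(congr1 (fun v : 'cV[C]_4 => v i3 ord0)) /eqP;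
    rewrite !mxE oner_eq0.
- exact: in_qline_quatj.
- exact/(on_lineZ _ _ b_neq0)/on_line_wedger.
Qed.

End HalfTouchStd.

End Model.

Definition circle_or_half_touching (C : numClosedFieldType) (p q : 'cV[C]_4)
    (a : 'M[C]_4) : Prop :=
  (exists x : C, exists c : C, x \is Num.real /\
      a = c *: wedge (x *: p + q) (quatj (x *: p + q)))
  \/ (exists c : C, a = c *: wedge p (quatj p))
  \/ (exists z : C,
        half_touch a (wedge p q) /\
        forall u : 'cV[C]_4, u != 0 ->
          (on_sphere a u /\ on_sphere (wedge p q) u <->
           in_qline u (z *: p + q) \/ in_qline u (Num.conj z *: p + q))).

Section Classification.
Variable C : numClosedFieldType.

Lemma Cr_classification_std (K : 'M[C]_4) :
  in_Cr p_std q_std (p_std + q_std) K -> circle_or_half_touching p_std q_std K.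
Proof.
case/in_Cr_std => [[c KE] | [b [w [b_neq0 KE]]]]; first by right; left; exists c.
have [w_real | w_nreal] := boolP (w \is Num.real).
  by left; exists w, b; rewrite KE (conj_Creal w_real).
have w_nconj : w^* != w by apply: contra w_nreal => /eqP/CrealP.
right; right; exists w; rewrite KE; split; first exact: half_touch_std.
by move=> u u_neq0; split; [case; apply: common_points_std | apply: meet_points_std].
Qed.

Lemma circle_or_half_touching_congr (B : 'M[C]_4) p q K :
  B \in unitmx -> quat_linear B -> K^T = - K ->
  circle_or_half_touching p q K ->
  circle_or_half_touching (B *m p) (B *m q) (B *m K *m B^T).
Proof.
move=> B_unit B_quat K_antisym.
have combE z : z *: (B *m p) + B *m q = B *m (z *: p + q).
  by rewrite scalemxAr -mulmxDr.
case=> [[x [c [x_real KE]]] | [[c KE] | [z [Kpq Kpts]]]].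
- left; exists x, c; split=> //.
  by rewrite KE combE quatj_mul // wedge_mul scale_congr.
- by right; left; exists c; rewrite KE quatj_mul // wedge_mul scale_congr.
right; right; exists z; rewrite wedge_mul; split.
  by apply: half_touch_congr => //; apply: wedge_tr.
move=> u u_neq0; rewrite -[u](mulKVmx B_unit) !on_sphere_congr // !combE !in_qline_mul //.
by apply: Kpts; rewrite -(mulmx_unit_eq0 B_unit) mulKVmx.
Qed.

End Classification.

Theorem mainTheorem14 (C : numClosedFieldType) (p q : 'cV[C]_4) :
  qdirect p q ->
  forall a : 'M[C]_4, in_Cr p q (p + q) a ->
    (exists x : C, exists c : C, x \is Num.real /\
        a = c *: wedge (x *: p + q) (quatj (x *: p + q)))
    \/ (exists c : C, a = c *: wedge p (quatj p))
    \/ (exists z : C,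
          half_touch a (wedge p q) /\
          forall u : 'cV[C]_4, u != 0 ->
            (on_sphere a u /\ on_sphere (wedge p q) u <->
             in_qline u (z *: p + q) \/ in_qline u (Num.conj z *: p + q))).
Proof.
move=> pq_direct a Ca; pose B := frame p q.
have B_unit : B \in unitmx := frame_unit pq_direct.
have B_quat : quat_linear B := frame_quat_linear p q.
have aE : a = B *m (invmx B *m a *m (invmx B)^T) *m B^T by rewrite congrKV.
have Ca_std : in_Cr p_std q_std (p_std + q_std) (invmx B *m a *m (invmx B)^T).
  by rewrite -(in_Cr_congr B_unit B_quat) mulmxDr frame_p frame_q -aE.
have := circle_or_half_touching_congr B_unit B_quat (in_Cr_antisym Ca_std)
  (Cr_classification_std Ca_std).
by rewrite frame_p frame_q -aE.
Qed.
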